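(* Let $G$ be a finite group and $N\lhd G$ such that $G/N$ is a cyclic $p$-group, and let $\chi$ be a $p$-vanishing character of $G$. Then: (a) $\chi=\psi^G$ for some character $\psi$ of $N$; and for any character $\psi$ of $N$ with $\psi^G=\chi$: (b) if $h\in N$ has order divisible by $p$ and the $G$-conjugacy class of $h$ coincides with its $N$-conjugacy class, then $\psi(h)=0$; (c) if $\psi$ is $G$-invariant then $\psi$ is $p$-vanishing.
   Context: A character is $p$-vanishing if it vanishes on every element of order divisible by $p$. $\psi^G$ denotes the induced character. *)

From HB Require Import structures.
From mathcomp Require Import all_boot all_order all_algebra all_fingroup all_solvable all_field all_character.
Set Implicit Arguments. Unset Strict Implicit. Unset Printing Implicit Defensive.
Import GRing.Theory Num.Theory.
Local Open Scope ring_scope.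

Definition p_vanishing (gT : finGroupType) (G : {group gT}) (p : nat)
  (chi : 'CF(G)) : Prop :=
  forall g, g \in G -> (p %| #[g]%g)%N -> chi g = 0.

From HB Require Import structures.
From mathcomp Require Import all_boot all_order all_algebra all_fingroup all_solvable all_field all_character.
Set Implicit Arguments. Unset Strict Implicit. Unset Printing Implicit Defensive.
Import GRing.Theory Num.Theory.

(* Elements of G outside N have order divisible by p, so chi vanishes off N.
   For theta in Irr(N) with inertia group T, T/N is cyclic, so theta extends
   to some eta in Irr(T); since chi vanishes off N, the multiplicity of theta
   in chi_N is then |T : N| times that of eta in chi_T. A G-invariant
   character of N with this divisibility is 'Res ('Ind psi) for a character
   psi of N, and two class functions of G vanishing off N with equal
   restrictions coincide, whence (a). Parts (b) and (c) follow from the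
   induction formula, in which every conjugate of h contributes psi h. *)

Local Open Scope ring_scope.

Lemma repr_mx_conj_intertwineX (R : comUnitRingType) (gT : finGroupType)
    (N : {group gT}) g n (X : mx_representation R N n.+1) (A : 'M[R]_n.+1) :
  g \in 'N(N)%g -> {in N, forall x, X x *m A = A *m X (x ^ g)%g} ->
  forall j, {in N, forall x, X x *m A ^+ j = A ^+ j *m X (x ^ g ^+ j)%g}.
Proof.
move=> nNg XA; elim=> [|j IHj] x Nx; first by rewrite expg0 conjg1 expr0 mulmx1 mul1mx.
rewrite exprSr -mulmxE mulmxA IHj // -!mulmxA XA ?memJ_norm ?groupX //.
by rewrite -conjgM -expgSr.
Qed.

Lemma mem_expg_coset_order (gT : finGroupType) (N : {group gT}) g :
  g \in 'N(N)%g -> (g ^+ #[coset N g])%g \in N.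
Proof. by move=> nNg; apply: coset_idr; rewrite ?groupX // morphX ?expg_order. Qed.

Section CyclicQuotientExtension.

Variables (gT : finGroupType) (G N : {group gT}) (g : gT) (n : nat).
Variables (X : mx_representation algC N n.+1) (A : 'M[algC]_n.+1).
Hypotheses (nsNG : (N <| G)%g) (Gg : g \in G).
Hypothesis defGN : (G / N)%g = <[coset N g]>%g.
Local Notation k := #[coset N g]%g.
Hypothesis XA : {in N, forall x, X x *m A = A *m X (x ^ g)%g}.
Hypothesis Ak : A ^+ k = X (g ^+ k)%g.

Let nNG : G \subset 'N(N)%g := normal_norm nsNG.

Lemma mem_coset_expg x i :
  x \in G -> coset N x = (coset N g ^+ i)%g -> ((g ^+ i)^-1 * x)%g \in N.
Proof.
move=> Gx Dx; apply: coset_idr; first by rewrite groupM ?groupV ?groupX ?(subsetP nNG).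
by rewrite morphM ?morphV ?morphX ?groupV ?groupX ?(subsetP nNG) //= Dx mulVg.
Qed.

(* When x = g^i y with y in N, ext_mx i x = A^i X(y) is the value at x of the
   extension of X mapping g to A; by Ak it does not depend on i. *)
Let ext_mx i x := A ^+ i *m X ((g ^+ i)^-1 * x)%g.

Lemma ext_mx_periodic i x :
  ((g ^+ i)^-1 * x)%g \in N -> ext_mx (i + k) x = ext_mx i x.
Proof.
move=> Nx; have Ngk := mem_expg_coset_order (subsetP nNG g Gg).
rewrite /ext_mx exprD Ak expgD invMg -mulgA -mulmxE -mulmxA.
by rewrite -repr_mxM ?mulKVg ?groupV // groupM ?groupV.
Qed.

Lemma ext_mx_congr i j x : x \in G ->
  coset N x = (coset N g ^+ i)%g -> coset N x = (coset N g ^+ j)%g ->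
  ext_mx i x = ext_mx j x.
Proof.
move=> Gx Di Dj.
have ext_mx_mod m :
    coset N x = (coset N g ^+ m)%g -> ext_mx m x = ext_mx (m %% k)%N x.
  move=> Dm; rewrite {1}(divn_eq m k) addnC.
  elim: (m %/ k)%N => [|q IHq]; first by rewrite addn0.
  rewrite mulSn addnCA addnC ext_mx_periodic ?IHq //; apply: mem_coset_expg => //.
  by rewrite Dm expgD mulnC expgM expg_order expg1n mulg1 expg_mod_order.
rewrite ext_mx_mod // [RHS]ext_mx_mod //; congr ext_mx.
by apply/eqP; rewrite -eq_expg_mod_order -Di -Dj.
Qed.

Lemma ext_mx_mul i j x y :
  ((g ^+ i)^-1 * x)%g \in N -> ((g ^+ j)^-1 * y)%g \in N ->
  ext_mx i x *m ext_mx j y = ext_mx (i + j) (x * y).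
Proof.
have XAj := repr_mx_conj_intertwineX (subsetP nNG g Gg) XA.
move=> Nx Ny; rewrite /ext_mx -mulmxA (mulmxA (X _)) XAj //.
rewrite exprD -mulmxE -!mulmxA -repr_mxM ?memJ_norm ?groupX ?(subsetP nNG) //.
by rewrite conjgE !mulgA mulgK expgD invMg.
Qed.

Let idx x :=
  if [pick i : 'I_k | coset N x == (coset N g ^+ i)%g] is Some i then val i else 0%N.

Lemma coset_idx x : x \in G -> coset N x = (coset N g ^+ idx x)%g.
Proof.
move=> Gx; have /cycleP[i Di] : coset N x \in <[coset N g]>%g.
  by rewrite -defGN mem_quotient.
rewrite /idx; case: pickP => [j /eqP // | /(_ (Ordinal (ltn_pmod i (order_gt0 _))))].
by rewrite /= expg_mod_order Di eqxx.
Qed.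

Lemma mx_repr_cyclic_quotient_ext :
  exists Y : mx_representation algC G n.+1, {in N, forall x, Y x = X x}.
Proof.
have Nidx x : x \in G -> ((g ^+ idx x)^-1 * x)%g \in N.
  by move=> Gx; apply: mem_coset_expg => //; apply: coset_idx.
have YN x : x \in N -> ext_mx (idx x) x = X x.
  move=> Nx; have Gx := subsetP (normal_sub nsNG) x Nx.
  have Dx0 : coset N x = (coset N g ^+ 0)%g by rewrite coset_id.
  by rewrite (ext_mx_congr Gx (coset_idx Gx) Dx0) /ext_mx expr0 mul1mx expg0 invg1 mul1g.
have Yrepr : mx_repr G (fun x => ext_mx (idx x) x).
  split=> [|x y Gx Gy]; first by rewrite YN ?repr_mx1.
  have Gxy := groupM Gx Gy.
  rewrite ext_mx_mul ?Nidx //; apply: ext_mx_congr (coset_idx Gxy) _ => //.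
  by rewrite morphM ?(subsetP nNG) //= (coset_idx Gx) (coset_idx Gy) expgD.
by exists (MxRepresentation Yrepr).
Qed.

End CyclicQuotientExtension.

Lemma invariant_irr_repr_conj_intertwiner (gT : finGroupType) (N : {group gT})
    g n k (X : mx_representation algC N n.+1) :
  g \in 'N(N)%g -> mx_irreducible X -> g \in 'I[cfRepr X]%g ->
  (0 < k)%N -> (g ^+ k)%g \in N ->
  exists2 A : 'M[algC]_n.+1,
    {in N, forall x, X x *m A = A *m X (x ^ g)%g} & A ^+ k = X (g ^+ k)%g.
Proof.
move=> nNg irrX Ig k_gt0 Nz; set z := (g ^+ k)%g in Nz *.
have Xg_repr : mx_repr N (fun x => X (x ^ g)%g).
  split=> [|x y Nx Ny]; first by rewrite conj1g repr_mx1.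
  by rewrite conjMg repr_mxM ?memJ_norm.
have /cfRepr_rsimP[B _ freeB XB] :
    cfRepr X == cfRepr (MxRepresentation Xg_repr).
  apply/eqP/cfun_inP => x Nx; rewrite !cfunE /= Nx.
  by have := cfConjgEJ (cfRepr X) x nNg; rewrite (inertiaJ Ig) !cfunE memJ_norm // Nx => ->.
(* Schur: B^k X(z)^-1 centralizes X, hence is a scalar c; rescaling B by a
   k-th root of c^-1 turns B^k into X(z). *)
have XBk := repr_mx_conj_intertwineX nNg XB k.
pose C := B ^+ k *m X z^-1%g.
have /is_scalar_mxP[c DC] : is_scalar_mx C.
  apply: mx_abs_irr_cent_scalar (groupC irrX) _ _; apply/centgmxP => x Nx.
  have nNz := subsetP (normG N) z Nz.
  rewrite /C -mulmxA -repr_mxM ?groupV // mulmxA XBk // -mulmxA.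
  by rewrite -repr_mxM ?groupV ?memJ_norm // conjgE -/z mulgA mulgK.
have Bk : B ^+ k = c *: X z.
  rewrite -[B ^+ k]mulmx1 -(repr_mx1 X) -(mulVg z) repr_mxM ?groupV //.
  by rewrite mulmxA -/C DC mul_scalar_mx.
have nz_c : c != 0.
  have uBk : B ^+ k \is a GRing.unit by rewrite unitrX // -row_free_unit.
  by apply: contraTneq uBk => c0; rewrite Bk c0 scale0r unitr0.
exists (k.-root c^-1 *: B) => [x Nx|].
  by rewrite -scalemxAr XB // scalemxAl.
by rewrite exprZn rootCK // Bk scalerA mulVf // scale1r.
Qed.

Lemma cyclic_quotient_invariant_irr_extendible (gT : finGroupType)
    (G N : {group gT}) (t : Iirr N) :
  (N <| G)%g -> cyclic (G / N)%g -> G \subset 'I['chi_t]%g ->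
  exists c : Iirr G, 'Res[N] 'chi_c = 'chi_t.
Proof.
move=> nsNG /cyclicP[gb defGN] IGt; have [sNG nNG] := andP nsNG.
have /morphimP[g nNg Gg Dgb] : gb \in (G / N)%g by rewrite defGN cycle_id.
rewrite {gb}Dgb in defGN.
have /irr_reprP[[[|n] X] irrX DX] := mem_irr t.
  by have [] := (mx_irrP _).1 irrX.
rewrite DX in IGt.
have [A XA Ak] := invariant_irr_repr_conj_intertwiner nNg irrX
  (subsetP IGt g Gg) (order_gt0 _) (mem_expg_coset_order nNg).
have [Y YX] := mx_repr_cyclic_quotient_ext nsNG Gg defGN XA Ak.
have resY : 'Res[N] (cfRepr Y) = 'chi_t.
  by apply/cfun_inP => x Nx; rewrite DX cfResE // !cfunE Nx (subsetP sNG) //= YX.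
have /irrP[c Dc] : cfRepr Y \in irr G.
  by apply: (@cfRes_irr_irr _ G N) (cfRepr_char Y) _; rewrite resY mem_irr.
by exists c; rewrite -Dc.
Qed.

Lemma cfdot_Res_on (gT : finGroupType) (T N : {group gT}) (xi phi : 'CF(T)) :
  N \subset T -> xi \in 'CF(T, N) ->
  '['Res[N] xi, 'Res[N] phi] = #|T : N|%g%:R * '[xi, phi].
Proof.
move=> sNT xiN; rewrite !cfdotE [\sum_(x in T) _](big_setID N) /= (setIidPr sNT).
rewrite [X in _ + X]big1 ?addr0 => [|x /setDP[_ Nx]]; last first.
  by rewrite (cfun_on0 xiN Nx) mul0r.
rewrite natf_indexg // mulrCA mulrA mulKf ?neq0CG //; congr (_ * _).
by apply: eq_bigr => x Nx; rewrite !cfResE.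
Qed.

Lemma cfdot_Res_irr_inertia_multiple (gT : finGroupType) (G N : {group gT})
    (chi : 'CF(G)) (s : Iirr N) :
  (N <| G)%g -> cyclic (G / N)%g -> chi \is a character -> chi \in 'CF(G, N) ->
  exists b, '['Res[N] chi, 'chi_s] = (#|'I_G['chi_s] : N|%g * b)%:R.
Proof.
move=> nsNG cycGN Nchi chiN; pose T := 'I_G['chi_s]%G.
have nsNT : (N <| T)%g := normal_Inertia 'chi_s (normal_sub nsNG).
have sNT := normal_sub nsNT; have sTG : T \subset G by apply: subsetIl.
have [c Dc] := cyclic_quotient_invariant_irr_extendible nsNT
  (cyclicS (quotientS N sTG) cycGN) (subsetIr _ _).
have chiTN : 'Res[T] chi \in 'CF(T, N).
  apply/cfun_onP => x Nx; have [Tx | /cfun0-> //] := boolP (x \in T).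
  by rewrite cfResE // (cfun_on0 chiN Nx).
have /natrP[b Db] : '['Res[T] chi, 'chi_c] \in Num.nat.
  by rewrite Cnat_cfdot_char ?cfRes_char ?irr_char.
by exists b; rewrite natrM -(cfResRes chi sNT sTG) -{1}Dc cfdot_Res_on // Db.
Qed.

Lemma cfdot_ResInd_irr (gT : finGroupType) (G N : {group gT}) (s t : Iirr N) :
  (N <| G)%g ->
  '['Res[N] ('Ind[G] 'chi_s), 'chi_t] =
    if 'chi_t \in ('chi_s ^: G)%CF then #|'I_G['chi_s] : N|%g%:R else 0.
Proof.
move=> nsNG; have sIG : ('I_G['chi_s] \subset G)%g by apply: subsetIl.
case: ifP => [sGt | s'Gt].
  rewrite cfdot_Res_l -(cfclass_Ind nsNG sGt) -cfdot_Res_l cfResInd //.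
  rewrite cfdotZl cfdot_suml (eq_bigr (fun y => (y \in 'I_G['chi_s]%g)%:R)); last first.
    by move=> y Gy; rewrite cfdotC (cfdot_irr_conjg _ nsNG Gy) conjC_nat.
  rewrite (big_setID 'I_G['chi_s]%g) /= (setIidPr sIG) [X in _ + X]big1 ?addr0; last first.
    by move=> y /setDP[_ /negPf->].
  rewrite (eq_bigr (fun _ => 1)) => [|y ->//]; rewrite sumr_const.
  by rewrite natf_indexg ?sub_Inertia ?normal_sub // mulrC.
rewrite cfResInd // cfdotZl cfdot_suml big1 ?mulr0 // => y Gy.
rewrite -conjg_IirrE cfdot_irr; case: eqP => // Dt.
by case/negP: s'Gt; rewrite -Dt conjg_IirrE; apply/cfclassP; exists y.
Qed.

Lemma invariant_char_ResInd (gT : finGroupType) (G N : {group gT}) (phi : 'CF(N)) :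
  (N <| G)%g -> phi \is a character -> {in G, forall y, (phi ^ y)%CF = phi} ->
  (forall s : Iirr N, exists b, '[phi, 'chi_s] = (#|'I_G['chi_s] : N|%g * b)%:R) ->
  exists2 psi : 'CF(N), psi \is a character & 'Res[N] ('Ind[G] psi) = phi.
Proof.
move=> nsNG; have [m] := ubnP (Num.truncn (phi 1%g)).
elim: m phi => // m IHm phi lt_phi1 Nphi Iphi mulIphi.
have [-> | /neq0_has_constt[s phi_s]] := eqVneq phi 0.
  by exists 0; rewrite ?rpred0 // !linear0.
have [b Db] := mulIphi s; set rho := 'Res[N] ('Ind[G] 'chi_s).
pose phi' := phi - b%:R *: rho.
have phi'E t : '[phi', 'chi_t] =
    if 'chi_t \in ('chi_s ^: G)%CF then 0 else '[phi, 'chi_t].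
  rewrite cfdotBl cfdotZl cfdot_ResInd_irr //.
  case: ifP => [/cfclassP[y Gy ->] | _]; last by rewrite mulr0 subr0.
  by rewrite -{1}(Iphi y Gy) cfConjg_iso Db natrM mulrC subrr.
have Nphi' : phi' \is a character.
  apply/forallP => t; rewrite coord_cfdot phi'E.
  by case: ifP => _; [apply: rpred0 | apply: Cnat_cfdot_char_irr].
have lt_phi'1 : (Num.truncn (phi' 1%g) < m)%N.
  have b_gt0 : (0 < b)%N.
    by move: phi_s; rewrite irr_consttE Db lt0n; apply: contraNneq => ->; rewrite muln0.
  have /natrP[a Da] := Cnat_char1 Nphi'; have /natrP[d Dd] := Cnat_char1 Nphi.
  rewrite ltnS in lt_phi1; apply: leq_trans lt_phi1.
  rewrite Da Dd !natrK -(ltr_nat algC) -Da -Dd !cfunE gtrBl mulr_gt0 ?ltr0n //.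
  by rewrite cfRes1 cfInd1 ?normal_sub // mulr_gt0 ?irr1_gt0 // ltr0n indexg_gt0.
have Iphi' : {in G, forall y, (phi' ^ y)%CF = phi'}.
  move=> y Gy; rewrite linearB linearZ /= Iphi // /rho.
  by rewrite (cfConjgRes _ (normal_refl G) nsNG Gy) cfConjg_id.
have mulIphi' t : exists b', '[phi', 'chi_t] = (#|'I_G['chi_t] : N|%g * b')%:R.
  by rewrite phi'E; case: ifP => _; [exists 0%N; rewrite muln0 | apply: mulIphi].
have [psi' Npsi' Dpsi'] := IHm phi' lt_phi'1 Nphi' Iphi' mulIphi'.
exists (psi' + b%:R *: 'chi_s); first by rewrite rpredD // scaler_nat rpredMn ?irr_char.
by rewrite !linearD !linearZ /= Dpsi' subrK.
Qed.

Lemma cyclic_quotient_char_on_Ind (gT : finGroupType) (G N : {group gT}) (chi : 'CF(G)) :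
  (N <| G)%g -> cyclic (G / N)%g -> chi \is a character -> chi \in 'CF(G, N) ->
  exists2 psi : 'CF(N), psi \is a character & 'Ind[G] psi = chi.
Proof.
move=> nsNG cycGN Nchi chiN.
have IchiN y : y \in G -> ('Res[N] chi ^ y)%CF = 'Res[N] chi.
  by move=> Gy; rewrite (cfConjgRes _ (normal_refl G) nsNG Gy) cfConjg_id.
have [psi Npsi Dpsi] := invariant_char_ResInd nsNG (cfRes_char N Nchi) IchiN
  (fun s => cfdot_Res_irr_inertia_multiple s nsNG cycGN Nchi chiN).
exists psi => //; apply/cfunP => x; have [Nx | N'x] := boolP (x \in N).
  by have /cfunP/(_ x) := Dpsi; rewrite !cfResE ?normal_sub.
by rewrite (cfun_on0 (cfInd_normal _ nsNG) N'x) (cfun_on0 chiN N'x).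
Qed.

Lemma cfIndE_conj_invariant (gT : finGroupType) (G H : {group gT}) (psi : 'CF(H)) h :
  H \subset G -> h \in H -> {in G, forall y, psi (h ^ y)%g = psi h} ->
  ('Ind[G] psi) h = #|G : H|%g%:R * psi h.
Proof.
move=> sHG Hh psiJ; rewrite cfIndE ?(subsetP sHG) // (eq_bigr _ psiJ) sumr_const.
by rewrite -[psi h *+ _]mulr_natl mulrA natf_indexg // [_^-1 * _]mulrC.
Qed.

Lemma p_dvd_order_notin (gT : finGroupType) (G N : {group gT}) (p : nat) x :
  (N <| G)%g -> (p.-group (G / N))%g -> x \in G -> x \notin N -> (p %| #[x]%g)%N.
Proof.
move=> nsNG pGN Gx N'x; have nNx := subsetP (normal_norm nsNG) x Gx.
have ntx : coset N x != 1%g by apply: contra N'x => /eqP/(coset_idr nNx).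
rewrite -(pdiv_p_elt (mem_p_elt pGN (mem_quotient N Gx)) ntx).
exact: dvdn_trans (pdiv_dvd _) (morph_order (coset_morphism N) nNx).
Qed.

Lemma p_vanishing_cfun_on (gT : finGroupType) (G N : {group gT}) (p : nat)
    (chi : 'CF(G)) :
  (N <| G)%g -> (p.-group (G / N))%g -> p_vanishing p chi -> chi \in 'CF(G, N).
Proof.
move=> nsNG pGN pv; apply/cfun_onP => x N'x.
have [Gx | /cfun0-> //] := boolP (x \in G).
exact: pv Gx (p_dvd_order_notin nsNG pGN Gx N'x).
Qed.

Local Open Scope group_scope.

Theorem proposition2p8 (gT : finGroupType) (G N : {group gT}) (p : nat)
  (chi : 'CF(G)) :
  prime p -> N <| G -> cyclic (G / N) -> p.-group (G / N) ->
  chi \is a character -> p_vanishing p chi ->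
  [/\ (exists2 psi : 'CF(N), psi \is a character & ('Ind[G] psi = chi)%R),
      (forall psi : 'CF(N), psi \is a character -> ('Ind[G] psi = chi)%R ->
         forall h, h \in N -> (p %| #[h])%N -> h ^: G = h ^: N -> psi h = 0%R)
    & (forall psi : 'CF(N), psi \is a character -> ('Ind[G] psi = chi)%R ->
         (forall y, y \in G -> (psi ^ y)%CF = psi) -> p_vanishing p psi)].
Proof.
move=> _ nsNG cycGN pGN Nchi pv; have [sNG nNG] := andP nsNG.
have chiN := p_vanishing_cfun_on nsNG pGN pv.
have psi_vanish (psi : 'CF(N)) h : ('Ind[G] psi = chi)%R -> h \in N -> (p %| #[h])%N ->
    {in G, forall y, psi (h ^ y) = psi h} -> psi h = 0%R.
  move=> Dpsi Nh ph psiJ; have := pv h (subsetP sNG h Nh) ph.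
  rewrite -Dpsi (cfIndE_conj_invariant sNG Nh psiJ) => /eqP.
  by rewrite mulf_eq0 pnatr_eq0 (gtn_eqF (indexg_gt0 G N)) => /eqP.
split=> [|psi _ Dpsi h Nh ph hGN|psi _ Dpsi Ipsi h Nh ph].
- exact: cyclic_quotient_char_on_Ind.
- apply: psi_vanish => // y Gy.
  have /imsetP[z Nz ->] : h ^ y \in h ^: N by rewrite -hGN memJ_class.
  exact: cfunJ.
- apply: psi_vanish => // y Gy.
  by rewrite -{1}(Ipsi y Gy) cfConjgEJ ?(subsetP nNG).
Qed.
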